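(* Let $n\ge4$, $\mathfrak g=\mathfrak{so}(2n+1,\mathbb C)$, and let $\mathfrak q=\mathfrak l\oplus\mathfrak n$ be the maximal parabolic subalgebra of type $B_n(n-1)$ (determined by $\alpha_{n-1}$). Let $V(\mu+\epsilon_{n\gamma})=\mathfrak l_{n\gamma}\otimes\mathfrak z(\mathfrak n)$. Then the $\mathfrak l$-intertwining operator $\tilde\tau_2|_{V(\mu+\epsilon_{n\gamma})^*}:V(\mu+\epsilon_{n\gamma})^*\to\mathcal P^2(\mathfrak g(1))$ is not identically zero.
   Context: Type $B_n$: $\mathfrak g=\mathfrak{so}(2n+1,\mathbb C)$ with Cartan $\mathfrak h$, roots $\pm\varepsilon_j\pm\varepsilon_k$ ($j<k$) and $\pm\varepsilon_j$, simple roots $\alpha_j=\varepsilon_j-\varepsilon_{j+1}$ ($j<n$), $\alpha_n=\varepsilon_n$, Killing form $\kappa$, root vectors $X_\alpha$. $\mathfrak q=\mathfrak l\oplus\mathfrak n$ is the standard maximal parabolic subalgebra determined by $\alpha_{n-1}$: $\mathfrak l$ is $\mathfrak h$ plus root spaces of roots in the span of $\Pi\setminus\{\alpha_{n-1}\}$. Grading by the $\alpha_{n-1}$-coefficient: $\mathfrak g=\bigoplus_{j=-2}^2\mathfrak g(j)$, $\mathfrak l=\mathfrak g(0)$, $\Delta(\mathfrak g(1))=\{\varepsilon_j\pm\varepsilon_n,\ \varepsilon_j : 1\le j\le n-1\}$, $\mathfrak z(\mathfrak n)=\mathfrak g(2)$ with roots $\varepsilon_j+\varepsilon_k$ ($1\le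 j<k\le n-1$), $\bar{\mathfrak n}=\mathfrak g(-1)\oplus\mathfrak g(-2)$, $\mathfrak z(\bar{\mathfrak n})=\mathfrak g(-2)$. The highest weight of $\mathfrak g(1)$ is $\mu=\varepsilon_1+\varepsilon_n$. $\mathfrak l_{n\gamma}=\mathrm{span}\{X_{\varepsilon_n},[X_{\varepsilon_n},X_{-\varepsilon_n}],X_{-\varepsilon_n}\}\cong\mathfrak{sl}(2,\mathbb C)$ is the simple ideal of $[\mathfrak l,\mathfrak l]$ corresponding to $\alpha_n$; $\mathfrak l_{n\gamma}\otimes\mathfrak z(\mathfrak n)$ is an irreducible $\mathfrak l$-module, denoted $V(\mu+\epsilon_{n\gamma})$, of highest weight $\varepsilon_1+\varepsilon_2+\varepsilon_n$. $\omega=\sum_{\gamma\in\Delta(\mathfrak z(\mathfrak n))}X^*_\gamma\otimes X_\gamma$ where $X^*_\gamma\in\mathfrak g_{-\gamma}$, $\kappa(X^*_\gamma,X_{\gamma'})=\delta_{\gamma\gamma'}$; $\tau_2:\mathfrak g(1)\to\mathfrak l\otimes\mathfrak z(\mathfrak n)$, $\tau_2(X)=\tfrac12(\mathrm{ad}(X)^2\otimes\mathrm{Id})\omega$. For an irreducible constituent $W$ of $\mathfrak l\otimes\mathfrak z(\mathfrak n)$ its dual $W^*$ is realized in $\mathfrak l\otimes\mathfrak z(\bar{\mathfrak n})$ via $(A\otimes B)(C\otimes D)=\kappa(A,C)\kappa(B,D)$, and $\tilde\tau_2|_{W^*}:W^*\to\mathcal P^2(\mathfrak g(1))$ (quadratic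 polynomials on $\mathfrak g(1)$) is $\tilde\tau_2(Y^* )(X)=Y^*(\tau_2(X))$. *)

(* matrix model of so(2n+1, C), C := R[i] for R : realType. *)
From mathcomp Require Import all_boot all_order all_algebra complex.
From mathcomp Require Import reals.
Set Implicit Arguments. Unset Strict Implicit. Unset Printing Implicit Defensive.
Import Order.TTheory GRing.Theory Num.Theory.
Local Open Scope ring_scope.

Section SoModel.
Variables (K : fieldType) (n : nat).

(* Basis of C^(2n+1): index i < n  <-> e_{i+1};  n <= i < 2n <-> e_{-(i-n+1)};
   i = 2n <-> e_0.  Symmetric form: (e_i, e_{-i}) = 1, (e_0, e_0) = 1. *)
Definition Jform : 'M[K]_(n.*2.+1) :=
  \matrix_(i < n.*2.+1, j < n.*2.+1)
    ((((i < n)%N && (nat_of_ord j == (nat_of_ord i + n)%N))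
     || ((j < n)%N && (nat_of_ord i == (nat_of_ord j + n)%N))
     || ((i == n.*2 :> nat) && (j == n.*2 :> nat)))%:R).

Definition gso : {vspace 'M[K]_(n.*2.+1)} :=
  lker (linfun (fun X : 'M[K]_(n.*2.+1) => X^T *m Jform + Jform *m X)).

Definition lie (X Y : 'M[K]_(n.*2.+1)) : 'M[K]_(n.*2.+1) := X *m Y - Y *m X.

Definition kappa (X Y : 'M[K]_(n.*2.+1)) : K :=
  \sum_(i < \dim gso)
     coord (vbasis gso) i (lie X (lie Y (tnth (vbasis gso) i))).

Definition cartan (H : 'M[K]_(n.*2.+1)) : Prop := H \in gso /\ is_diag_mx H.

(* A weight lambda = sum_i lambda_i eps_{i+1} evaluated on H \in h *)
Definition weval (lam : 'I_n -> K) (H : 'M[K]_(n.*2.+1)) : K :=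
  \sum_(i < n) lam i * H (inord i) (inord i).

(* eps_{j+1} (0-indexed j) *)
Definition eps (j : nat) : 'I_n -> K := fun i => (i == j :> nat)%:R.
Definition wadd (a b : 'I_n -> K) : 'I_n -> K := fun i => a i + b i.
Definition wopp (a : 'I_n -> K) : 'I_n -> K := fun i => - a i.

Definition rootsp (lam : 'I_n -> K) (X : 'M[K]_(n.*2.+1)) : Prop :=
  X \in gso /\ forall H, cartan H -> lie H X = weval lam H *: X.

(* Grading element H0 in h: alpha_j(H0) = delta_{j,n-1}, i.e.
   H0 = diag(1,..,1,0,-1,..,-1,0,0), so that g(j) = { X in g | [H0,X] = j X }
   is the span of root spaces whose alpha_{n-1}-coefficient is j (plus h if j=0). *)
Definition H0 : 'M[K]_(n.*2.+1) :=
  \matrix_(i < n.*2.+1, j < n.*2.+1) (if i == j then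
                    (if (i < n.-1)%N then 1
                     else if ((n <= i) && (i < n + n.-1))%N then -1 else 0)
                  else 0).

Definition grade (j : int) (X : 'M[K]_(n.*2.+1)) : Prop :=
  X \in gso /\ lie H0 X = j%:~R *: X.

Definition lngamma (Xe Xme A : 'M[K]_(n.*2.+1)) : Prop :=
  exists a b c : K, A = a *: Xe + b *: lie Xe Xme + c *: Xme.

(* Tensors in g (x) g are represented as formal finite sums of pure tensors;
   the pairing (A (x) B)(C (x) D) = kappa(A,C) kappa(B,D), extended bilinearly. *)
Definition tpair (s t : seq ('M[K]_(n.*2.+1) * 'M[K]_(n.*2.+1))) : K :=
  \sum_(p <- s) \sum_(q <- t) kappa p.1 q.1 * kappa p.2 q.2.

(* Delta(z(n)) = { eps_{j+1} + eps_{k+1} : j < k < n-1 } (0-indexed).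
   omega = sum_gamma X*_gamma (x) X_gamma;
   tau_2(X) = 1/2 (ad(X)^2 (x) Id) omega. *)
Definition tau2 (Xg Xs : nat -> nat -> 'M[K]_(n.*2.+1)) (X : 'M[K]_(n.*2.+1))
  : seq ('M[K]_(n.*2.+1) * 'M[K]_(n.*2.+1)) :=
  [seq (2%:R^-1 *: lie X (lie X (Xs jk.1 jk.2)), Xg jk.1 jk.2)
  | jk <- [seq jk <- [seq (j, k) | j <- iota 0 n, k <- iota 0 n]
                | (jk.1 < jk.2 < n.-1)%N]].

Definition tau2t (Xg Xs : nat -> nat -> 'M[K]_(n.*2.+1))
  (Ystar : seq ('M[K]_(n.*2.+1) * 'M[K]_(n.*2.+1))) (X : 'M[K]_(n.*2.+1)) : K :=
  tpair Ystar (tau2 Xg Xs X).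

End SoModel.

(* Take [Y^* = X_(eps_n) (x) X^*_(eps_1+eps_2)], which lies in [l_(n gamma) (x) z(nbar)], and
   [X = X_(eps_1-eps_n) + X_(eps_2)] in [g(1)].  Pairing with [Y^*] keeps only the
   [gamma = eps_1+eps_2] term of [omega], and invariance of the Killing form turns
   [tau2~ Y^* X] into [kappa([[X_(eps_n), X], X], X^*_(eps_1+eps_2)) / 2].  In the matrix model
   [[[X_(eps_n), X], X] = 2 X_(eps_1+eps_2)], which pairs to a nonzero number with
   [X^*_(eps_1+eps_2)].  Since the root vectors of the statement are only given up to scalars,
   they are first identified with explicit matrices: the weight of a root vector forces its
   support. *)

From HB Require Import structures.
From mathcomp Require Import all_boot all_order all_algebra complex.
From mathcomp Require Import reals zify ring.
Set Implicit Arguments. Unset Strict Implicit. Unset Printing Implicit Defensive.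
Import Order.TTheory GRing.Theory Num.Theory.
Local Open Scope ring_scope.

Section SoMatrices.
Variables (K : fieldType) (n : nat).
Local Notation N := n.*2.+1.
Local Notation M := 'M[K]_N.
Local Notation J := (Jform K n).
Local Notation so := (gso K n).

Definition so_defect (X : M) : M := X^T *m J + J *m X.

Fact so_defect_is_linear : linear so_defect.
Proof.
move=> a u v; rewrite /so_defect linearD linearZ /= mulmxDl mulmxDr.
by rewrite -!scalemxAl -!scalemxAr scalerDr addrACA.
Qed.
HB.instance Definition _ :=
  GRing.isLinear.Build K M M *:%R so_defect so_defect_is_linear.

Lemma gsoP X : (X \in so) = (X^T *m J + J *m X == 0).
Proof. by rewrite memv_ker -[linfun _]/(linfun so_defect) lfunE. Qed.

Definition sig (i : 'I_N) : 'I_N :=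
  inord (if (i < n)%N then (i + n)%N else if (i < n.*2)%N then (i - n)%N else n.*2).

Lemma sig_val (i : 'I_N) : nat_of_ord (sig i) =
  (if (i < n)%N then (i + n)%N else if (i < n.*2)%N then (i - n)%N else n.*2).
Proof. by rewrite inordK //; have := ltn_ord i; case: ifP => ?; [|case: ifP => ?]; lia. Qed.

Lemma sigK : involutive sig.
Proof.
move=> i; apply: val_inj; rewrite /= !sig_val.
have := ltn_ord i; case: (ltnP i n) => h1 h; [|case: (ltnP i n.*2) => h2];
  rewrite ?sig_val; repeat case: ifP => ?; lia.
Qed.

Lemma JformE a b : J a b = (b == sig a)%:R.
Proof.
rewrite mxE; congr (_%:R); rewrite -(inj_eq val_inj) /= sig_val.
by have := ltn_ord a; have := ltn_ord b; case: ifP => ?; [|case: ifP => ?]; lia.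
Qed.

Lemma mulJmxE (A : M) a b : (J *m A) a b = A (sig a) b.
Proof.
rewrite mxE (bigD1 (sig a)) //= JformE eqxx mul1r big1 ?addr0 // => k /negbTE hk.
by rewrite JformE hk mul0r.
Qed.

Lemma mulmxJE (A : M) a b : (A *m J) a b = A a (sig b).
Proof.
rewrite mxE (bigD1 (sig b)) //= JformE sigK eqxx mulr1 big1 ?addr0 // => k hk.
by rewrite JformE -(can2_eq sigK sigK) eq_sym (negbTE hk) mulr0.
Qed.

Lemma gso_skew_entry X a b : X \in so -> X (sig b) (sig a) = - X a b.
Proof.
rewrite gsoP => /eqP /matrixP /(_ b (sig a)).
rewrite [X in X = _]mxE mulmxJE mulJmxE sigK [X^T _ _]mxE [X in _ = X]mxE.
by move/eqP; rewrite addrC addr_eq0 => /eqP.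
Qed.

Lemma gso_entryP (X : M) : reflect (forall a b, X (sig b) (sig a) = - X a b) (X \in so).
Proof.
apply: (iffP idP) => [hX a b|hX]; first exact: gso_skew_entry.
rewrite gsoP; apply/eqP/matrixP => a b.
by rewrite mxE mulmxJE mulJmxE [X^T _ _]mxE -{1}[a]sigK hX mxE addNr.
Qed.

Definition skew (a b : 'I_N) : M := delta_mx a b - delta_mx (sig b) (sig a).

Lemma skew_gso a b : skew a b \in so.
Proof.
apply/gso_entryP => c d; rewrite !mxE !(inj_eq (can_inj sigK)).
rewrite -[a in sig d == a]sigK -[b in sig c == b]sigK !(inj_eq (can_inj sigK)).
by rewrite opprB andbC [(d == b) && _]andbC.
Qed.

Lemma diag_gso (d : 'rV[K]_N) : (forall k, d 0 (sig k) = - d 0 k) -> diag_mx d \in so.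
Proof.
move=> hd; apply/gso_entryP => a b; rewrite !mxE (inj_eq (can_inj sigK)) hd.
by case: eqP => [->|/nesym/eqP/negbTE->]; rewrite ?eqxx ?mulNrn.
Qed.

Lemma lie_gso (X Y : M) : X \in so -> Y \in so -> lie X Y \in so.
Proof.
move=> /gso_entryP hX /gso_entryP hY; apply/gso_entryP => a b.
rewrite !mxE opprB; congr (_ - _); rewrite (reindex_inj (can_inj sigK)) /=;
  by apply: eq_bigr => k _; rewrite hX hY mulrNN mulrC.
Qed.

Fact lie_is_linear (A : M) : linear (lie A).
Proof.
move=> a u v; rewrite /lie mulmxDr mulmxDl -scalemxAr -scalemxAl.
by rewrite opprD addrACA scalerBr.
Qed.
HB.instance Definition _ A :=
  GRing.isLinear.Build K M M *:%R (lie A) (lie_is_linear A).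

Lemma lieZl a (A B : M) : lie (a *: A) B = a *: lie A B.
Proof. by rewrite /lie -scalemxAl -scalemxAr -scalerBr. Qed.

Lemma jacobi (A X Z : M) : lie (lie A X) Z = lie A (lie X Z) - lie X (lie A Z).
Proof.
have ac (V : zmodType) (a b c d e f : V) : a - b + d - c = a - e + d - f + e - c + f - b.
  rewrite (addrAC _ (- f) e) (addrAC _ (- e) d) subrK (addrAC _ (- c) f) subrK.
  by rewrite (addrAC a (- b)) (addrAC (a + d) (- b)).
by rewrite /lie !mulmxBl !mulmxBr !mulmxA !opprB !addrA; apply: ac.
Qed.

Local Notation B := (vbasis so).

(* The trace of [f] restricted to [so], so that [kappa X Y = so_trace (lie X \o lie Y)]. *)
Definition so_trace (f : M -> M) : K :=
  \sum_(i < \dim so) coord B i (f (tnth B i)).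

Lemma so_traceB (f g : M -> M) : so_trace (fun X => f X - g X) = so_trace f - so_trace g.
Proof. by rewrite /so_trace -sumrB; apply: eq_bigr => i _; rewrite linearB. Qed.

Lemma so_trace_comm (f g : {linear M -> M}) :
  {in so, forall X, f X \in so} -> {in so, forall X, g X \in so} ->
  so_trace (f \o g) = so_trace (g \o f).
Proof.
move=> fso gso.
have coord_comp (h k : {linear M -> M}) : {in so, forall X, k X \in so} -> forall i,
    coord B i (h (k (tnth B i))) =
    \sum_(j < \dim so) coord B j (k (tnth B i)) * coord B i (h (tnth B j)).
  move=> kso i; have /kso kBi : tnth B i \in so by apply: vbasis_mem; rewrite mem_tnth.
  rewrite {1}(coord_vbasis kBi) !linear_sum /=.
  by apply: eq_bigr => j _; rewrite !linearZ /= !(tnth_nth 0).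
rewrite /so_trace; under eq_bigr do rewrite /= coord_comp //.
under [RHS]eq_bigr do rewrite /= coord_comp //.
by rewrite exchange_big /=; apply: eq_bigr => i _; apply: eq_bigr => j _; rewrite mulrC.
Qed.

Lemma kappa_sym (A C : M) : A \in so -> C \in so -> kappa A C = kappa C A.
Proof.
by move=> hA hC; apply: (so_trace_comm (f := lie A) (g := lie C)) => X; apply: lie_gso.
Qed.

Lemma kappa_inv (A X C : M) : A \in so -> X \in so -> C \in so ->
  kappa (lie A X) C = kappa A (lie X C).
Proof.
move=> hA hX hC.
have -> : kappa (lie A X) C =
    so_trace (lie A \o lie X \o lie C) - so_trace (lie X \o (lie A \o lie C)).
  by rewrite -so_traceB; apply: eq_bigr => i _; rewrite jacobi.
have -> : kappa A (lie X C) =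
    so_trace (lie A \o lie X \o lie C) - so_trace ((lie A \o lie C) \o lie X).
  by rewrite -so_traceB; apply: eq_bigr => i _; rewrite jacobi (linearB (lie A)).
congr (_ - _); apply: so_trace_comm => Y hY; first exact: lie_gso.
by apply: lie_gso => //; apply: lie_gso.
Qed.

Lemma kappa_lie_lie (A X C : M) : A \in so -> X \in so -> C \in so ->
  kappa A (lie X (lie X C)) = kappa (lie (lie A X) X) C.
Proof. by move=> hA hX hC; rewrite !kappa_inv ?lie_gso. Qed.

Lemma kappaZl a (A C : M) : kappa (a *: A) C = a * kappa A C.
Proof.
by rewrite /kappa mulr_sumr; apply: eq_bigr => i _; rewrite lieZl linearZ.
Qed.

Lemma kappaZr a (A C : M) : kappa A (a *: C) = a * kappa A C.
Proof.
by rewrite /kappa mulr_sumr; apply: eq_bigr => i _; rewrite lieZl linearZ /= linearZ.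
Qed.

Lemma lie_diag_mxE (d : 'rV[K]_N) (Y : M) a b :
  lie (diag_mx d) Y a b = (d 0 a - d 0 b) * Y a b.
Proof. by rewrite /lie mul_diag_mx mul_mx_diag !mxE mulrBl [Y a b * _]mulrC. Qed.

(* [wt k i] is the [eps_(i+1)]-coordinate of the weight of the basis vector [e_k]. *)
Definition wt (k i : nat) : int := (k == i)%N%:Z - (k == (i + n)%N)%N%:Z.

Definition cartan_dual (i : nat) : M := diag_mx (\row_k (wt k i)%:~R).

Lemma wt_sig (k : 'I_N) i : (i < n)%N -> wt (sig k) i = - wt k i.
Proof.
by move=> hi; rewrite /wt sig_val; have := ltn_ord k; case: ifP => ?; [|case: ifP => ?]; lia.
Qed.

Lemma cartan_dual_cartan i : (i < n)%N -> cartan (cartan_dual i).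
Proof.
move=> hi; split; last exact: diag_mx_is_diag.
by apply: diag_gso => k; rewrite !mxE wt_sig // mulrNz.
Qed.

Lemma basis_index (k : 'I_N) :
  (k = n.*2 :> nat) \/ exists i : 'I_n, (k = i :> nat) \/ (k = i + n :> nat)%N.
Proof.
have [kn|nk] := ltnP k n; first by right; exists (Ordinal kn); left.
have [k2n|] := ltnP k n.*2; last by have := ltn_ord k; left; lia.
have kn : (k - n < n)%N by lia.
by right; exists (Ordinal kn); right => /=; lia.
Qed.

Lemma wt_ord (i0 i : 'I_n) : wt i0 i = (i0 == i :> nat)%:Z.
Proof. by rewrite /wt; have := ltn_ord i0; case: eqP => ?; case: eqP => ? //; lia. Qed.

Lemma wt_ord_addn (i0 i : 'I_n) : wt (i0 + n) i = - (i0 == i :> nat)%:Z.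
Proof. by rewrite /wt eqn_add2r; have := ltn_ord i; case: eqP => ?; case: eqP => ? //; lia. Qed.

Lemma wt_top (i : 'I_n) : wt n.*2 i = 0.
Proof. by rewrite /wt; have := ltn_ord i; case: eqP => ?; case: eqP => ? //; lia. Qed.

Lemma weval_cartan_dual (lam : 'I_n -> K) (i : 'I_n) : weval lam (cartan_dual i) = lam i.
Proof.
have inordK' (k : 'I_n) : nat_of_ord (inord k : 'I_N) = k.
  by rewrite inordK //; have := ltn_ord k; lia.
rewrite /weval (bigD1 i) //= big1 ?addr0 => [|k hk];
  rewrite !mxE eqxx mulr1n inordK' wt_ord.
  by rewrite eqxx mulr1.
by rewrite (inj_eq val_inj) (negbTE hk) mulr0.
Qed.

Lemma root_support (lam : 'I_n -> K) (Y : M) a b : rootsp lam Y -> Y a b != 0 ->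
  forall i : 'I_n, (wt a i)%:~R - (wt b i)%:~R = lam i.
Proof.
move=> [_ hY] Yab_neq0 i; have /matrixP/(_ a b) := hY _ (cartan_dual_cartan (ltn_ord i)).
by rewrite lie_diag_mxE weval_cartan_dual [RHS]mxE !mxE => /(mulIf Yab_neq0).
Qed.

Lemma skew_support (Y : M) p q : Y \in so -> p != sig q ->
  (forall a b, Y a b != 0 -> (a == p) && (b == q) || (a == sig q) && (b == sig p)) ->
  Y = Y p q *: skew p q.
Proof.
move=> /gso_skew_entry Yskew p_neq hY; apply/matrixP => a b; rewrite !mxE.
have [Yab0|/hY] := eqVneq (Y a b) 0; last first.
  case/orP=> /andP [/eqP-> /eqP->]; first by rewrite !eqxx (negbTE p_neq) subr0 mulr1.
  by rewrite Yskew !eqxx eq_sym (negbTE p_neq) sub0r mulrN1.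
rewrite Yab0; case: (boolP ((a == p) && (b == q))) => [/andP [/eqP ea /eqP eb]|_].
  by rewrite -ea -eb Yab0 mul0r.
case: (boolP ((a == sig q) && (b == sig p))) => [/andP [/eqP ea /eqP eb]|_].
  by rewrite -[Y p q]opprK -Yskew -ea -eb Yab0 oppr0 mul0r.
by rewrite subrr mulr0.
Qed.

Lemma lie_diag_delta (d : 'rV[K]_N) a b :
  lie (diag_mx d) (delta_mx a b) = (d 0 a - d 0 b) *: delta_mx a b.
Proof.
apply/matrixP => i j; rewrite lie_diag_mxE [RHS]mxE [delta_mx a b i j]mxE.
by case: (eqVneq i a) => [->|]; case: (eqVneq j b) => [->|] //= *; rewrite ?mulr0.
Qed.

Lemma lie_diag_skew (d : 'rV[K]_N) a b : (forall k, d 0 (sig k) = - d 0 k) ->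
  lie (diag_mx d) (skew a b) = (d 0 a - d 0 b) *: skew a b.
Proof.
move=> hd; rewrite linearB /= !lie_diag_delta !hd scalerBr; congr (_ - _).
by rewrite opprK addrC.
Qed.

Lemma weval_eps (j : nat) (H : M) :
  (j < n)%N -> weval (@eps K n j) H = H (inord j) (inord j).
Proof.
move=> hj; rewrite /weval (bigD1 (Ordinal hj)) //= big1 ?addr0 /eps => [|i /negbTE hi].
  by rewrite eqxx mul1r.
by rewrite -(inj_eq val_inj) /= in hi; rewrite hi mul0r.
Qed.

Lemma weval_wadd (lam mu : 'I_n -> K) (H : M) :
  weval (wadd lam mu) H = weval lam H + weval mu H.
Proof. by rewrite /weval -big_split; apply: eq_bigr => i _; rewrite mulrDl. Qed.

Lemma weval_wopp (lam : 'I_n -> K) (H : M) : weval (wopp lam) H = - weval lam H.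
Proof. by rewrite /weval -sumrN; apply: eq_bigr => i _; rewrite mulNr. Qed.

End SoMatrices.

(* [kappa] is generalized first: otherwise the simplifications below try to unfold it. *)
Lemma tau2t_dual (K : fieldType) (n : nat) (Xg Xs : nat -> nat -> 'M[K]_(n.*2.+1))
    (A X : 'M[K]_(n.*2.+1)) (j k : nat) :
  (forall j k j' k', (j < k < n.-1)%N -> (j' < k' < n.-1)%N ->
     kappa (Xs j k) (Xg j' k') = ((j == j') && (k == k'))%:R) ->
  (j < k < n.-1)%N ->
  tau2t Xg Xs [:: (A, Xs j k)] X = kappa A (2%:R^-1 *: lie X (lie X (Xs j k))).
Proof.
rewrite /tau2t /tpair big_cons big_nil addr0 /tau2 big_map.
move: (@kappa K n) => kap hdual hjk.
set L := [seq jk <- _ | _].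
have jk_in_L : (j, k) \in L.
  rewrite mem_filter hjk; apply/allpairsP; exists (j, k); rewrite !mem_iota /=.
  by split=> //; lia.
have uniq_L : uniq L.
  by apply/filter_uniq/allpairs_uniq; [exact: iota_uniq | exact: iota_uniq | move=> [? ?] [? ?]].
rewrite (bigD1_seq _ jk_in_L uniq_L) /= hdual // !eqxx mulr1 big1_seq ?addr0 //.
move=> [j' k'] /andP [ne]; rewrite mem_filter /= => /andP [hjk' _].
rewrite hdual //; case: (j =P j') ne => [<-|_ _]; last by rewrite mulr0.
by case: (k =P k') => [<-|_]; rewrite ?eqxx ?mulr0.
Qed.

Section Grading.
Variables (K : fieldType) (n : nat).
Local Notation M := 'M[K]_(n.*2.+1).
Local Notation H0 := (H0 K n).

Lemma H0_diag : H0 = diag_mx (\row_k H0 k k).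
Proof.
apply/matrixP => i j; rewrite [RHS]mxE [in RHS]mxE.
by case: (eqVneq i j) => [->|ne]; rewrite ?mulr1n // mulr0n mxE (negbTE ne).
Qed.

Lemma H0_sig k : H0 (sig k) (sig k) = - H0 k k.
Proof.
rewrite !mxE !eqxx sig_val; have := ltn_ord k.
case: (ltnP k n) => h1; [|case: (ltnP k n.*2) => h2] => hk;
  by repeat case: ifP => ?; rewrite ?oppr0 ?opprK //; lia.
Qed.

Lemma cartan_H0 : cartan H0.
Proof.
split; last by rewrite H0_diag diag_mx_is_diag.
by rewrite H0_diag; apply: diag_gso => k; rewrite [LHS]mxE [in RHS]mxE H0_sig.
Qed.

Lemma H0_inord_lt j : (j < n.-1)%N -> H0 (inord j) (inord j) = 1.
Proof. by move=> hj; rewrite mxE eqxx inordK ?hj //; lia. Qed.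

Lemma lie_H0_skew a b : lie H0 (skew K a b) = (H0 a a - H0 b b) *: skew K a b.
Proof.
by rewrite {1}H0_diag lie_diag_skew => [|k]; rewrite !(mxE _ (fun _ k => H0 k k)) ?H0_sig.
Qed.

Lemma grade_root_zbar j k (Y : M) : (j < k < n.-1)%N ->
  rootsp (wopp (wadd (@eps K n j) (@eps K n k))) Y -> grade (-2) Y.
Proof.
move=> hjk [Yso hY]; split => //; rewrite (hY _ cartan_H0).
rewrite weval_wopp weval_wadd !weval_eps ?H0_inord_lt; try lia.
by congr (_ *: _); rewrite -mulr2n.
Qed.

End Grading.

Section Slots.
Variables (K : fieldType) (n : nat).
Local Notation N := n.*2.+1.
Local Notation M := 'M[K]_N.
Local Notation H0 := (H0 K n).
Hypothesis n_gt2 : (2 < n)%N.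

(* Slots 0..6 stand for the basis vectors e_1, e_2, e_n, e_(-1), e_(-2), e_(-n), e_0;
   [swap] is [sig] on slots. *)
Definition slot (s : nat) : nat := nth 0 [:: 0; 1; n.-1; n; n.+1; n.*2.-1; n.*2] s.
Definition swap (s : nat) : nat := nth 0 [:: 3; 4; 5; 0; 1; 2; 6] s.
Definition pt (s : nat) : 'I_N := inord (slot s).
Definition E (s t : nat) : M := delta_mx (pt s) (pt t).

Definition Xn : M := skew K (pt 2) (pt 6).
Definition X12 : M := skew K (pt 0) (pt 4).
Definition Xdeg1 : M := skew K (pt 0) (pt 2) + skew K (pt 1) (pt 6).

Lemma pt_val s : nat_of_ord (pt s) = slot s.
Proof. by rewrite inordK // /slot; do 7?[case: s => [|s]] => /=; rewrite ?nth_nil; lia. Qed.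

Lemma sig_pt s : (s < 7)%N -> sig (pt s) = pt (swap s).
Proof.
move=> hs; apply: val_inj; rewrite /= sig_val !pt_val /slot.
by do 7?[case: s hs => [|s] hs] => //=; repeat case: ifP => ?; lia.
Qed.

Lemma skew_pt s t : (s < 7)%N -> (t < 7)%N ->
  skew K (pt s) (pt t) = E s t - E (swap t) (swap s).
Proof. by move=> hs ht; rewrite /skew !sig_pt. Qed.

Lemma pt_eq s t : (s < 7)%N -> (t < 7)%N -> (pt s == pt t) = (s == t).
Proof.
rewrite -(inj_eq val_inj) /= !pt_val /slot.
by do 7?[case: s => [|s]] => //; do 7?[case: t => [|t]] => //= _ _; lia.
Qed.

Lemma mulE s t u v : (t < 7)%N -> (u < 7)%N -> E s t *m E u v = E s v *+ (t == u).
Proof. by move=> ht hu; rewrite mul_delta_mx_cond pt_eq. Qed.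

(* Expanded into the [E s t], both sides are integral combinations of matrix units,
   so the identity holds entrywise by [ring]. *)
Ltac expand_skew :=
  rewrite ?skew_pt // /swap /= /lie ?(mulmxDl, mulmxDr, mulmxBl, mulmxBr, mulNmx, mulmxN)
    !mulE //= ?(mulr0n, mulr1n); apply/matrixP => i j; rewrite !mxE; ring.

Lemma lie_Xn_Xdeg1 : lie Xn Xdeg1 = - (skew K (pt 2) (pt 4) + skew K (pt 0) (pt 6)).
Proof. by rewrite /Xn /Xdeg1; expand_skew. Qed.

Lemma lie_lie_Xn_Xdeg1 : lie (lie Xn Xdeg1) Xdeg1 = 2%:R *: X12.
Proof. by rewrite lie_Xn_Xdeg1 /Xdeg1 /X12; expand_skew. Qed.

Lemma grade_Xdeg1 : grade 1 Xdeg1.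
Proof.
split; first by rewrite rpredD ?skew_gso.
have H0_pt2 : H0 (pt 2) (pt 2) = 0.
  by rewrite mxE eqxx pt_val /slot /=; repeat case: ifP => ? //; lia.
have H0_pt6 : H0 (pt 6) (pt 6) = 0.
  by rewrite mxE eqxx pt_val /slot /=; repeat case: ifP => ? //; lia.
rewrite linearD /= !lie_H0_skew H0_pt2 H0_pt6 !H0_inord_lt ?subr0 ?scale1r // /slot /=; lia.
Qed.

End Slots.

Section RootVectors.
Variables (K : numFieldType) (n : nat).
Hypothesis n_gt2 : (2 < n)%N.
Local Notation M := 'M[K]_(n.*2.+1).

Lemma root_support_int (lam : 'I_n -> K) (z : 'I_n -> int) (Y : M) a b :
  rootsp lam Y -> (forall i, lam i = (z i)%:~R) -> Y a b != 0 ->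
  forall i : 'I_n, wt n a i - wt n b i = z i.
Proof.
by move=> hY hz Yab i; apply: (@intr_inj K); rewrite intrB -hz; apply: root_support hY Yab i.
Qed.

(* Sorting each of [a], [b] into [e_0], [e_i] or [e_(-i)] leaves a linear problem. *)
Ltac basis_cases a b wab :=
  let ea := fresh "ea" in let eb := fresh "eb" in
  let ia := fresh "ia" in let ib := fresh "ib" in
  destruct (basis_index a) as [ea|[ia [ea|ea]]];
  destruct (basis_index b) as [eb|[ib [eb|eb]]];
  try (have := wab ia; have := ltn_ord ia); try (have := wab ib; have := ltn_ord ib);
  rewrite ?ea ?eb ?wt_ord ?wt_ord_addn ?wt_top /=; lia.

Lemma root_eps_n_shape (Y : M) :
  rootsp (@eps K n n.-1) Y -> Y = Y (pt n 2) (pt n 6) *: Xn K n.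
Proof.
move=> hY; apply: skew_support; first exact: hY.1.
  by rewrite (sig_pt n_gt2) // (pt_eq n_gt2).
move=> a b Yab.
have wab (i : 'I_n) : wt n a i - wt n b i = (i == n.-1 :> nat)%:Z.
  by apply: (root_support_int (z := fun i : 'I_n => (i == n.-1 :> nat)%:Z) hY) Yab i.
have n1_lt : (n.-1 < n)%N by lia.
rewrite !(sig_pt n_gt2) // /swap /= -!(inj_eq val_inj) /= !(pt_val n_gt2) /slot /=.
move: (wab (Ordinal n1_lt)); basis_cases a b wab.
Qed.

Lemma root_eps12_shape (Y : M) :
  rootsp (wadd (@eps K n 0) (@eps K n 1)) Y -> Y = Y (pt n 0) (pt n 4) *: X12 K n.
Proof.
move=> hY; apply: skew_support; first exact: hY.1.
  by rewrite (sig_pt n_gt2) // (pt_eq n_gt2).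
move=> a b Yab.
have wab (i : 'I_n) : wt n a i - wt n b i = (i == 0 :> nat)%:Z + (i == 1 :> nat)%:Z.
  apply: (root_support_int (z := fun i : 'I_n => (i == 0 :> nat)%:Z + (i == 1 :> nat)%:Z) hY)
    Yab i => j.
  by rewrite /wadd /eps intrD.
have [n0_lt n1_lt] : (0 < n)%N /\ (1 < n)%N by split; lia.
rewrite !(sig_pt n_gt2) // /swap /= -!(inj_eq val_inj) /= !(pt_val n_gt2) /slot /=.
move: (wab (Ordinal n0_lt)) (wab (Ordinal n1_lt)); basis_cases a b wab.
Qed.

End RootVectors.

Theorem proposition4p1 (R : realType) (n : nat) (hn : (4 <= n)%N)
  (* root vectors X_{eps_n}, X_{-eps_n} *)
  (Xe Xme : 'M[R[i]]_(n.*2.+1))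
  (hXe : rootsp (@eps R[i] n n.-1) Xe) (hXe0 : Xe != 0)
  (hXme : rootsp (wopp (@eps R[i] n n.-1)) Xme) (hXme0 : Xme != 0)
  (* root vectors X_gamma and dual vectors X*_gamma, gamma in Delta(z(n)) *)
  (Xg Xs : nat -> nat -> 'M[R[i]]_(n.*2.+1))
  (hXg : forall j k, (j < k < n.-1)%N ->
           rootsp (wadd (@eps R[i] n j) (@eps R[i] n k)) (Xg j k))
  (hXs : forall j k, (j < k < n.-1)%N ->
           rootsp (wopp (wadd (@eps R[i] n j) (@eps R[i] n k))) (Xs j k))
  (hdual : forall j k j' k', (j < k < n.-1)%N -> (j' < k' < n.-1)%N ->
           kappa (Xs j k) (Xg j' k') = ((j == j') && (k == k'))%:R) :
  exists Ystar : seq ('M[R[i]]_(n.*2.+1) * 'M[R[i]]_(n.*2.+1)),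
    (forall p, p \in Ystar -> lngamma Xe Xme p.1 /\ grade (-2) p.2) /\
    exists X : 'M[R[i]]_(n.*2.+1), grade 1 X /\ tau2t Xg Xs Ystar X != 0.
Proof.
have n_gt2 : (2 < n)%N by lia.
have h01 : (0 < 1 < n.-1)%N by lia.
have Xs_so := (hXs 0 1 h01).1.
set x := Xe (pt n 2) (pt n 6).
have eXe : Xe = x *: Xn R[i] n := root_eps_n_shape n_gt2 hXe.
have x_neq0 : x != 0 by apply: contraNneq hXe0; rewrite eXe => ->; rewrite scale0r.
have kappa_X12_Xs : kappa (X12 R[i] n) (Xs 0 1) != 0.
  rewrite kappa_sym ?skew_gso //; apply/eqP => kappa0.
  move: (hdual 0 1 0 1 h01 h01); rewrite (root_eps12_shape n_gt2 (hXg 0 1 h01)).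
  by rewrite kappaZr kappa0 mulr0 => /eqP; rewrite eq_sym oner_eq0.
exists [:: (Xe, Xs 0 1)]; split.
  move=> p; rewrite inE => /eqP -> /=; split; last exact: grade_root_zbar (hXs 0 1 h01).
  by exists 1, 0, 0; rewrite scale1r !scale0r !addr0.
exists (Xdeg1 R[i] n); split; first exact: grade_Xdeg1.
have Xdeg1_so := (grade_Xdeg1 R[i] n_gt2).1.
rewrite (tau2t_dual _ _ hdual h01) kappaZr (kappa_lie_lie hXe.1 Xdeg1_so Xs_so).
rewrite eXe !lieZl lie_lie_Xn_Xdeg1 // !kappaZl.
by rewrite !mulf_neq0 ?invr_eq0 ?pnatr_eq0.
Qed.
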